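(* Let $\alpha\ge 0$, $\mu\ge 0$, $n\in\mathbb{N}$ and $x\in[0,\infty)$. Then $$\Delta_1:=T_n(t-x;x)=\frac{2\alpha x^2}{n},\qquad \Delta_2:=T_n((t-x)^2;x)=\frac{1}{n^2}x\left(4x^3\alpha^2+4\alpha x+n\right)+\frac{2\mu x}{n}\frac{e_\mu(-nx)}{e_\mu(nx)},$$ where $T_n$ acts on the variable $t$.
   Context: For $\mu>-\tfrac12$ define $\gamma_\mu(2k)=\dfrac{2^{2k}k!\,\Gamma(k+\mu+1/2)}{\Gamma(\mu+1/2)}$ and $\gamma_\mu(2k+1)=\dfrac{2^{2k+1}k!\,\Gamma(k+\mu+3/2)}{\Gamma(\mu+1/2)}$, $k\ge0$; $e_\mu(x)=\sum_{k\ge0} x^k/\gamma_\mu(k)$; $\theta_k=0$ if $k$ is even and $\theta_k=1$ if $k$ is odd. Let $h_k^\mu(\xi,\alpha)=\gamma_\mu(k)\sum_{j=0}^{\lfloor k/2\rfloor}\dfrac{\alpha^j\xi^{k-2j}}{j!\,\gamma_\mu(k-2j)}$. For $\alpha\ge0,\mu\ge0$, $n\in\mathbb{N}$ and $x\in[0,\infty)$ define $$T_n(f;x)=\frac{1}{e^{\alpha x^2}e_\mu(nx)}\sum_{k=0}^\infty \frac{h_k^\mu(n,\alpha)}{\gamma_\mu(k)}x^k f\!\left(\frac{k+2\mu\theta_k}{n}\right).$$ *)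

From Stdlib Require Import Reals Arith Factorial.
From Coquelicot Require Import Coquelicot.
Open Scope R_scope.

(* Pochhammer symbol (a)_k = a (a+1) ... (a+k-1) = Gamma(a+k)/Gamma(a). *)
Fixpoint poch (a : R) (k : nat) : R :=
  match k with
  | O => 1
  | S k' => poch a k' * (a + INR k')
  end.

(* gamma_mu(2k)   = 2^(2k)   k! Gamma(k+mu+1/2)/Gamma(mu+1/2)
   gamma_mu(2k+1) = 2^(2k+1) k! Gamma(k+mu+3/2)/Gamma(mu+1/2) *)
Definition gamma_mu (mu : R) (m : nat) : R :=
  if Nat.even m
  then 2 ^ m * INR (fact (Nat.div2 m)) * poch (mu + /2) (Nat.div2 m)
  else 2 ^ m * INR (fact (Nat.div2 m)) * poch (mu + /2) (S (Nat.div2 m)).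

Definition e_mu (mu x : R) : R := Series (fun k => x ^ k / gamma_mu mu k).

Definition theta (k : nat) : R := if Nat.odd k then 1 else 0.

Definition h_mu (mu : R) (k : nat) (xi alpha : R) : R :=
  gamma_mu mu k *
  sum_f_R0 (fun j => alpha ^ j * xi ^ (k - 2 * j) / (INR (fact j) * gamma_mu mu (k - 2 * j)))
           (Nat.div2 k).

Definition T_term (alpha mu : R) (n : nat) (f : R -> R) (x : R) (k : nat) : R :=
  h_mu mu k (INR n) alpha / gamma_mu mu k * x ^ k * f ((INR k + 2 * mu * theta k) / INR n).

Definition T_op (alpha mu : R) (n : nat) (f : R -> R) (x : R) : R :=
  Series (T_term alpha mu n f x) / (exp (alpha * x ^ 2) * e_mu mu (INR n * x)).

(* The coefficient h_k(n, alpha) x^k / gamma_mu(k) is the k-th term of the Cauchy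
   product of exp(alpha x^2), written as a power series supported on the even indices,
   with e_mu(n x) = sum_m (n x)^m / gamma_mu(m).  The nodes lambda_k = k + 2 mu theta_k
   satisfy gamma_mu(k+1) = gamma_mu(k) lambda_(k+1), so the first and second
   lambda-moments of e_mu follow from an index shift; they are additive across the
   product because lambda_(i+m) = i + lambda_m for even i.  In the second moment the
   parity of lambda enters through theta_m y^m = (y^m - (-y)^m)/2, which is where
   e_mu(-n x) comes from.  T_n of the quadratics t - x and (t - x)^2 is then a
   combination of the zeroth, first and second moments. *)

From Stdlib Require Import Reals Arith Lia Lra.
From Coquelicot Require Import Coquelicot.
Open Scope R_scope.

(* Coquelicot states these for an abstract normed module; on R the conclusions
   below are what [exact]/[eapply] can match against [+] and [*]. *)
Lemma is_series_Rplus (a b : nat -> R) (la lb : R) :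
  is_series a la -> is_series b lb -> is_series (fun k => a k + b k) (la + lb).
Proof. exact (is_series_plus a b la lb). Qed.

Lemma is_series_Rscal (c : R) (a : nat -> R) (l : R) :
  is_series a l -> is_series (fun k => c * a k) (c * l).
Proof. exact (is_series_scal c a l). Qed.

Lemma is_series_Rext (a b : nat -> R) (la lb : R) :
  (forall k, a k = b k) -> la = lb -> is_series a la -> is_series b lb.
Proof. intros Hab <-; exact (is_series_ext a b la Hab). Qed.

Lemma is_series_shift (a : nat -> R) (l : R) :
  a 0%nat = 0 -> is_series (fun k => a (S k)) l -> is_series a l.
Proof.
  intros H0 H. apply is_series_decr_1. rewrite H0.
  match goal with |- is_series _ ?L => replace L with l by (unfold plus, opp; simpl; ring) end.
  exact H.
Qed.

Lemma Series_nonneg (a : nat -> R) :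
  (forall k, 0 <= a k) -> ex_series a -> 0 <= Series a.
Proof.
  intros Ha Hex. rewrite <- (Rmult_0_l (Series a)), <- Series_scal_l.
  apply Series_le; [intros k; rewrite Rmult_0_l; split; [lra | apply Ha] | exact Hex].
Qed.

Lemma is_series_exp (z : R) : is_series (fun k => z ^ k / INR (fact k)) (exp z).
Proof.
  pose proof (proj1 (is_pseries_R _ _ _) (is_exp_Reals z)) as H.
  eapply is_series_Rext; [| reflexivity | exact H]. intros; unfold Rdiv; ring.
Qed.

Lemma is_series_0 : is_series (fun _ => 0) 0.
Proof.
  eapply is_series_Rext; [| | exact (is_series_Rscal 0 _ _ (is_series_exp 0))];
    intros; cbv beta; ring.
Qed.

Lemma is_series_INR_exp (z : R) :
  is_series (fun k => INR k * (z ^ k / INR (fact k))) (z * exp z).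
Proof.
  apply is_series_shift; [simpl; ring |].
  eapply is_series_Rext; [| reflexivity | exact (is_series_Rscal z _ _ (is_series_exp z))].
  intros k. cbn [fact pow]. rewrite mult_INR.
  pose proof (INR_fact_neq_0 k). pose proof (lt_0_INR (S k) (Nat.lt_0_succ k)).
  field; lra.
Qed.

Lemma is_series_INR2_exp (z : R) :
  is_series (fun k => INR k ^ 2 * (z ^ k / INR (fact k))) (z * (z + 1) * exp z).
Proof.
  apply is_series_shift; [simpl; ring |].
  eapply is_series_Rext; [| |
    exact (is_series_Rscal z _ _
      (is_series_Rplus _ _ _ _ (is_series_INR_exp z) (is_series_exp z)))].
  - intros k. cbn [fact pow]. rewrite mult_INR.
    pose proof (INR_fact_neq_0 k). pose proof (lt_0_INR (S k) (Nat.lt_0_succ k)).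
    rewrite S_INR in *. field; lra.
  - ring.
Qed.

Lemma is_series_even (a : nat -> R) (l : R) :
  (forall k, a (2 * k + 1)%nat = 0) -> is_series (fun k => a (2 * k)%nat) l -> is_series a l.
Proof.
  intros Hodd Heven.
  assert (H : is_pseries a 1 (l + 1 * 0)).
  { apply is_pseries_odd_even; apply is_pseries_R.
    - eapply is_series_Rext; [| reflexivity | exact Heven].
      intros; rewrite !pow1; ring.
    - eapply is_series_Rext; [| reflexivity | exact is_series_0].
      intros; rewrite Hodd; ring. }
  apply is_pseries_R in H.
  eapply is_series_Rext; [| | exact H]; [intros; cbv beta; rewrite pow1 | ]; ring.
Qed.

Lemma theta_S (m : nat) : theta (S m) = 1 - theta m.
Proof.
  unfold theta. rewrite Nat.odd_succ, <- Nat.negb_odd.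
  destruct (Nat.odd m); simpl; ring.
Qed.

Lemma theta_mul_pow (m : nat) (y : R) : theta m * y ^ m = (y ^ m - (- y) ^ m) / 2.
Proof.
  induction m as [| m IH].
  - unfold theta; simpl; field.
  - rewrite theta_S. cbn [pow].
    replace ((1 - theta m) * (y * y ^ m)) with (y * y ^ m - y * (theta m * y ^ m)) by ring.
    rewrite IH. field.
Qed.

Definition lam (mu : R) (k : nat) : R := INR k + 2 * mu * theta k.

Lemma lam_0 (mu : R) : lam mu 0 = 0.
Proof. unfold lam, theta; simpl; ring. Qed.

Lemma lam_S (mu : R) (m : nat) : lam mu (S m) = lam mu m + 1 + 2 * mu - 4 * mu * theta m.
Proof. unfold lam; rewrite theta_S, S_INR; ring. Qed.

Lemma lam_add_even (mu : R) (i k : nat) :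
  Nat.even i = true -> (i <= k)%nat -> lam mu k = INR i + lam mu (k - i).
Proof.
  intros Hi Hik. unfold lam.
  replace (theta k) with (theta (k - i)).
  - rewrite minus_INR by exact Hik. ring.
  - unfold theta. replace k with (i + (k - i))%nat at 2 by lia.
    rewrite Nat.odd_add. unfold Nat.odd at 2. rewrite Hi. reflexivity.
Qed.

Section Gamma.

Variable mu : R.
Hypothesis Hmu : 0 <= mu.

Lemma INR_le_lam (m : nat) : INR m <= lam mu m.
Proof. unfold lam, theta; destruct (Nat.odd m); nra. Qed.

Lemma lam_nonneg (m : nat) : 0 <= lam mu m.
Proof. exact (Rle_trans _ _ _ (pos_INR m) (INR_le_lam m)). Qed.

Lemma lam_S_pos (m : nat) : 0 < lam mu (S m).
Proof. exact (Rlt_le_trans _ _ _ (lt_0_INR _ (Nat.lt_0_succ m)) (INR_le_lam (S m))). Qed.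

Lemma gamma_mu_0 : gamma_mu mu 0 = 1.
Proof. unfold gamma_mu; simpl; ring. Qed.

Lemma gamma_mu_S (m : nat) : gamma_mu mu (S m) = gamma_mu mu m * lam mu (S m).
Proof.
  unfold gamma_mu, lam, theta.
  destruct (Nat.Even_or_Odd m) as [[k ->] | [k ->]].
  - rewrite <- Nat.add_1_r, Nat.even_even, Nat.even_odd, Nat.odd_odd, Nat.div2_double,
      Nat.add_1_r, Nat.div2_succ_double.
    cbn [poch pow]. rewrite S_INR, mult_INR. simpl (INR 2). field.
  - replace (S (2 * k + 1)) with (2 * S k)%nat by lia.
    rewrite Nat.even_even, Nat.even_odd, Nat.odd_even, Nat.div2_double,
      Nat.add_1_r, Nat.div2_succ_double.
    replace (2 * S k)%nat with (S (S (2 * k))) by lia.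
    cbn [poch pow fact]. rewrite mult_INR, !S_INR, mult_INR. simpl (INR 2). ring.
Qed.

Lemma gamma_mu_pos (m : nat) : 0 < gamma_mu mu m.
Proof.
  induction m as [| m IH].
  - rewrite gamma_mu_0; lra.
  - rewrite gamma_mu_S. exact (Rmult_lt_0_compat _ _ IH (lam_S_pos m)).
Qed.

Lemma INR_fact_le_gamma_mu (m : nat) : INR (fact m) <= gamma_mu mu m.
Proof.
  induction m as [| m IH].
  - rewrite gamma_mu_0; simpl; lra.
  - rewrite gamma_mu_S. cbn [fact]. rewrite mult_INR, Rmult_comm.
    apply Rmult_le_compat; auto using pos_INR, INR_le_lam.
Qed.

End Gamma.

Definition e_mu_term (mu y : R) (m : nat) : R := y ^ m / gamma_mu mu m.

Section EMu.

Variable mu : R.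
Hypothesis Hmu : 0 <= mu.

Lemma e_mu_term_nonneg (y : R) (m : nat) : 0 <= y -> 0 <= e_mu_term mu y m.
Proof.
  intros Hy. apply Rdiv_le_0_compat; [apply pow_le, Hy | apply gamma_mu_pos, Hmu].
Qed.

Lemma ex_series_e_mu_term (y : R) : ex_series (e_mu_term mu y).
Proof.
  apply (@ex_series_le R_AbsRing R_CompleteNormedModule _ (fun m => Rabs y ^ m / INR (fact m))).
  - intros m. change (norm (e_mu_term mu y m)) with (Rabs (e_mu_term mu y m)).
    unfold e_mu_term, Rdiv. rewrite Rabs_mult, Rabs_inv, <- RPow_abs.
    rewrite (Rabs_pos_eq (gamma_mu mu m)) by (apply Rlt_le, gamma_mu_pos, Hmu).
    apply Rmult_le_compat_l; [apply pow_le, Rabs_pos |].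
    apply Rinv_le_contravar; [apply INR_fact_lt_0 | apply INR_fact_le_gamma_mu, Hmu].
  - exists (exp (Rabs y)); apply is_series_exp.
Qed.

Lemma is_series_e_mu (y : R) : is_series (e_mu_term mu y) (e_mu mu y).
Proof. exact (Series_correct _ (ex_series_e_mu_term y)). Qed.

Lemma e_mu_pos (y : R) : 0 <= y -> 0 < e_mu mu y.
Proof.
  intros Hy. pose proof (ex_series_e_mu_term y) as Hex.
  unfold e_mu. fold (e_mu_term mu y). rewrite Series_incr_1 by exact Hex.
  unfold e_mu_term at 1. rewrite pow_O, gamma_mu_0.
  enough (0 <= Series (fun k => e_mu_term mu y (S k))) by lra.
  apply Series_nonneg;
    [intros; apply e_mu_term_nonneg, Hy | exact (proj1 (ex_series_incr_1 _) Hex)].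
Qed.

Lemma is_series_lam_e_mu (y : R) :
  is_series (fun m => lam mu m * e_mu_term mu y m) (y * e_mu mu y).
Proof.
  apply is_series_shift; [rewrite lam_0; ring |].
  eapply is_series_Rext; [| reflexivity | exact (is_series_Rscal y _ _ (is_series_e_mu y))].
  intros k. unfold e_mu_term. cbn [pow]. rewrite gamma_mu_S by exact Hmu.
  pose proof (gamma_mu_pos mu Hmu k). pose proof (lam_S_pos mu Hmu k).
  field; lra.
Qed.

Lemma is_series_lam2_e_mu (y : R) :
  is_series (fun m => lam mu m ^ 2 * e_mu_term mu y m)
    (y * ((y + 1) * e_mu mu y + 2 * mu * e_mu mu (- y))).
Proof.
  apply is_series_shift; [rewrite lam_0; ring |].
  eapply is_series_Rext; [| |
    exact (is_series_Rscal y _ _ (is_series_Rplus _ _ _ _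
      (is_series_Rplus _ _ _ _ (is_series_lam_e_mu y) (is_series_e_mu y))
      (is_series_Rscal (2 * mu) _ _ (is_series_e_mu (- y)))))]; [| ring].
  intros k. unfold e_mu_term. rewrite gamma_mu_S by exact Hmu.
  pose proof (gamma_mu_pos mu Hmu k). pose proof (lam_S_pos mu Hmu k).
  transitivity (y * (lam mu (S k) * y ^ k / gamma_mu mu k)); [| cbn [pow]; field; lra].
  rewrite lam_S.
  replace ((lam mu k + 1 + 2 * mu - 4 * mu * theta k) * y ^ k) with
    ((lam mu k + 1 + 2 * mu) * y ^ k - 4 * mu * (theta k * y ^ k)) by ring.
  rewrite theta_mul_pow. field; lra.
Qed.

End EMu.

Definition exp_even (z : R) (i : nat) : R :=
  if Nat.even i then z ^ Nat.div2 i / INR (fact (Nat.div2 i)) else 0.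

Lemma exp_even_double (z : R) (j : nat) : exp_even z (2 * j) = z ^ j / INR (fact j).
Proof. unfold exp_even. rewrite Nat.even_even, Nat.div2_double. reflexivity. Qed.

Lemma exp_even_odd (z : R) (j : nat) : exp_even z (2 * j + 1) = 0.
Proof. unfold exp_even. rewrite Nat.even_odd. reflexivity. Qed.

Lemma exp_even_nonneg (z : R) (i : nat) : 0 <= z -> 0 <= exp_even z i.
Proof.
  intros Hz. unfold exp_even. destruct (Nat.even i); [| lra].
  apply Rdiv_le_0_compat; [apply pow_le, Hz | apply INR_fact_lt_0].
Qed.

Lemma is_series_exp_even (z : R) : is_series (exp_even z) (exp z).
Proof.
  apply is_series_even; [apply exp_even_odd |].
  eapply is_series_Rext; [| reflexivity | exact (is_series_exp z)].
  intros; rewrite exp_even_double; reflexivity.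
Qed.

Lemma is_series_INR_exp_even (z : R) :
  is_series (fun i => INR i * exp_even z i) (2 * z * exp z).
Proof.
  apply is_series_even; [intros; rewrite exp_even_odd; ring |].
  eapply is_series_Rext; [| | exact (is_series_Rscal 2 _ _ (is_series_INR_exp z))].
  - intros; rewrite exp_even_double, mult_INR; simpl; ring.
  - ring.
Qed.

Lemma is_series_INR2_exp_even (z : R) :
  is_series (fun i => INR i ^ 2 * exp_even z i) (4 * z * (z + 1) * exp z).
Proof.
  apply is_series_even; [intros; rewrite exp_even_odd; ring |].
  eapply is_series_Rext; [| | exact (is_series_Rscal 4 _ _ (is_series_INR2_exp z))].
  - intros; rewrite exp_even_double, mult_INR; simpl; ring.
  - ring.
Qed.

Definition conv (a b : nat -> R) (k : nat) : R :=
  sum_f_R0 (fun i => a i * b (k - i)%nat) k.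

Lemma sum_f_R0_even (G : nat -> R) (k : nat) :
  sum_f_R0 (fun i => if Nat.even i then G i else 0) k =
  sum_f_R0 (fun j => G (2 * j)%nat) (Nat.div2 k).
Proof.
  set (F := fun i => if Nat.even i then G i else 0).
  assert (Hodd : forall N, sum_f_R0 F (2 * N + 1) = sum_f_R0 F (2 * N)).
  { intros N. rewrite Nat.add_1_r, tech5.
    replace (F (S (2 * N))) with 0
      by (unfold F; rewrite <- Nat.add_1_r, Nat.even_odd; reflexivity).
    ring. }
  assert (Heven : forall N, sum_f_R0 F (2 * N) = sum_f_R0 (fun j => G (2 * j)%nat) N).
  { induction N as [| N IH]; [reflexivity |].
    replace (2 * S N)%nat with (S (2 * N + 1)) by lia.
    rewrite tech5, Hodd, IH. unfold F.
    replace (S (2 * N + 1)) with (2 * S N)%nat by lia.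
    rewrite Nat.even_even. reflexivity. }
  destruct (Nat.Even_or_Odd k) as [[N ->] | [N ->]].
  - rewrite Nat.div2_double. apply Heven.
  - rewrite Nat.add_1_r, Nat.div2_succ_double, <- Nat.add_1_r, Hodd. apply Heven.
Qed.

Lemma conv_exp_even_lam (z mu : R) (b : nat -> R) (k : nat) :
  lam mu k * conv (exp_even z) b k =
  conv (fun i => INR i * exp_even z i) b k + conv (exp_even z) (fun m => lam mu m * b m) k.
Proof.
  unfold conv. rewrite scal_sum, <- plus_sum. apply sum_eq; intros i Hi.
  unfold exp_even. destruct (Nat.even i) eqn:Hev; [| ring].
  rewrite (lam_add_even mu i k Hev Hi). ring.
Qed.

Lemma conv_exp_even_lam2 (z mu : R) (b : nat -> R) (k : nat) :
  lam mu k ^ 2 * conv (exp_even z) b k =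
  conv (fun i => INR i ^ 2 * exp_even z i) b k
  + 2 * conv (fun i => INR i * exp_even z i) (fun m => lam mu m * b m) k
  + conv (exp_even z) (fun m => lam mu m ^ 2 * b m) k.
Proof.
  unfold conv. rewrite !scal_sum, <- !plus_sum. apply sum_eq; intros i Hi.
  unfold exp_even. destruct (Nat.even i) eqn:Hev; [| ring].
  rewrite (lam_add_even mu i k Hev Hi). ring.
Qed.

Lemma T_term_conv (alpha mu : R) (n : nat) (f : R -> R) (x : R) (k : nat) :
  0 <= mu ->
  T_term alpha mu n f x k =
  conv (exp_even (alpha * x ^ 2)) (e_mu_term mu (INR n * x)) k * f (lam mu k / INR n).
Proof.
  intros Hmu. unfold T_term, h_mu, conv, e_mu_term. f_equal.
  transitivity (sum_f_R0 (fun i => if Nat.even i then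
      (alpha * x ^ 2) ^ Nat.div2 i / INR (fact (Nat.div2 i)) *
      ((INR n * x) ^ (k - i) / gamma_mu mu (k - i)) else 0) k).
  2: { apply sum_eq; intros i _. unfold exp_even. destruct (Nat.even i); ring. }
  rewrite sum_f_R0_even.
  pose proof (gamma_mu_pos mu Hmu k).
  transitivity (x ^ k * sum_f_R0 (fun j => alpha ^ j * INR n ^ (k - 2 * j) /
    (INR (fact j) * gamma_mu mu (k - 2 * j))) (Nat.div2 k)); [field; lra |].
  rewrite scal_sum. apply sum_eq; intros j Hj. rewrite Nat.div2_double.
  assert (Hjk : (2 * j <= k)%nat).
  { pose proof (Nat.div2_odd k). destruct (Nat.odd k); simpl in *; lia. }
  replace (x ^ k) with ((x ^ 2) ^ j * x ^ (k - 2 * j))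
    by (rewrite <- pow_mult, <- pow_add; f_equal; lia).
  rewrite !Rpow_mult_distr.
  pose proof (INR_fact_neq_0 j). pose proof (gamma_mu_pos mu Hmu (k - 2 * j)).
  field; lra.
Qed.

Section Moments.

Variables mu z y : R.
Hypotheses (Hmu : 0 <= mu) (Hz : 0 <= z) (Hy : 0 <= y).

Let A0 (i : nat) : 0 <= exp_even z i := exp_even_nonneg z i Hz.
Let A1 (i : nat) : 0 <= INR i * exp_even z i := Rmult_le_pos _ _ (pos_INR i) (A0 i).
Let A2 (i : nat) : 0 <= INR i ^ 2 * exp_even z i := Rmult_le_pos _ _ (pow2_ge_0 _) (A0 i).
Let B0 (m : nat) : 0 <= e_mu_term mu y m := e_mu_term_nonneg mu Hmu y m Hy.
Let B1 (m : nat) : 0 <= lam mu m * e_mu_term mu y m :=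
  Rmult_le_pos _ _ (lam_nonneg mu Hmu m) (B0 m).
Let B2 (m : nat) : 0 <= lam mu m ^ 2 * e_mu_term mu y m := Rmult_le_pos _ _ (pow2_ge_0 _) (B0 m).

Lemma is_series_conv_exp_even_e_mu :
  is_series (conv (exp_even z) (e_mu_term mu y)) (exp z * e_mu mu y).
Proof.
  exact (is_series_mult_pos _ _ _ _ (is_series_exp_even z) (is_series_e_mu mu Hmu y) A0 B0).
Qed.

Lemma is_series_lam_conv_exp_even_e_mu :
  is_series (fun k => lam mu k * conv (exp_even z) (e_mu_term mu y) k)
    (exp z * ((2 * z + y) * e_mu mu y)).
Proof.
  pose proof (is_series_mult_pos _ _ _ _
    (is_series_INR_exp_even z) (is_series_e_mu mu Hmu y) A1 B0) as C10.
  pose proof (is_series_mult_pos _ _ _ _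
    (is_series_exp_even z) (is_series_lam_e_mu mu Hmu y) A0 B1) as C01.
  eapply is_series_Rext; [intros k; symmetry; apply conv_exp_even_lam | |
    exact (is_series_Rplus _ _ _ _ C10 C01)].
  ring.
Qed.

Lemma is_series_lam2_conv_exp_even_e_mu :
  is_series (fun k => lam mu k ^ 2 * conv (exp_even z) (e_mu_term mu y) k)
    (exp z * ((4 * z * (z + 1) + 4 * z * y + y * (y + 1)) * e_mu mu y
              + 2 * mu * y * e_mu mu (- y))).
Proof.
  pose proof (is_series_mult_pos _ _ _ _
    (is_series_INR2_exp_even z) (is_series_e_mu mu Hmu y) A2 B0) as C20.
  pose proof (is_series_mult_pos _ _ _ _
    (is_series_INR_exp_even z) (is_series_lam_e_mu mu Hmu y) A1 B1) as C11.
  pose proof (is_series_mult_pos _ _ _ _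
    (is_series_exp_even z) (is_series_lam2_e_mu mu Hmu y) A0 B2) as C02.
  eapply is_series_Rext; [intros k; symmetry; apply conv_exp_even_lam2 | |
    exact (is_series_Rplus _ _ _ _ (is_series_Rplus _ _ _ _ C20 (is_series_Rscal 2 _ _ C11)) C02)].
  ring.
Qed.

End Moments.

Lemma is_series_T_term_quadratic (alpha mu : R) (n : nat) (x : R) (f : R -> R) (p0 p1 p2 : R) :
  0 <= alpha -> 0 <= mu -> 0 <= x -> (forall t, f t = p0 + p1 * t + p2 * t ^ 2) ->
  is_series (T_term alpha mu n f x)
    (exp (alpha * x ^ 2) *
     (p0 * e_mu mu (INR n * x)
      + p1 / INR n * ((2 * (alpha * x ^ 2) + INR n * x) * e_mu mu (INR n * x))
      + p2 / INR n ^ 2 *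
        ((4 * (alpha * x ^ 2) * (alpha * x ^ 2 + 1) + 4 * (alpha * x ^ 2) * (INR n * x)
          + INR n * x * (INR n * x + 1)) * e_mu mu (INR n * x)
         + 2 * mu * (INR n * x) * e_mu mu (- (INR n * x))))).
Proof.
  intros Ha Hmu Hx Hf.
  assert (Hz : 0 <= alpha * x ^ 2) by nra.
  assert (Hy : 0 <= INR n * x) by (pose proof (pos_INR n); nra).
  pose proof (is_series_conv_exp_even_e_mu mu _ _ Hmu Hz Hy) as M0.
  pose proof (is_series_lam_conv_exp_even_e_mu mu _ _ Hmu Hz Hy) as M1.
  pose proof (is_series_lam2_conv_exp_even_e_mu mu _ _ Hmu Hz Hy) as M2.
  eapply is_series_Rext; [| | exact (is_series_Rplus _ _ _ _
    (is_series_Rplus _ _ _ _ (is_series_Rscal p0 _ _ M0) (is_series_Rscal (p1 / INR n) _ _ M1))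
    (is_series_Rscal (p2 / INR n ^ 2) _ _ M2))].
  - intros k. cbv beta. rewrite T_term_conv, Hf by exact Hmu.
    unfold Rdiv. rewrite <- pow_inv. ring.
  - ring.
Qed.

Theorem lemma4 (alpha mu : R) (n : nat) (x : R) :
  0 <= alpha -> 0 <= mu -> (1 <= n)%nat -> 0 <= x ->
  ex_series (T_term alpha mu n (fun t => t - x) x) /\
  T_op alpha mu n (fun t => t - x) x = 2 * alpha * x ^ 2 / INR n /\
  ex_series (T_term alpha mu n (fun t => (t - x) ^ 2) x) /\
  T_op alpha mu n (fun t => (t - x) ^ 2) x =
    / (INR n) ^ 2 * x * (4 * x ^ 3 * alpha ^ 2 + 4 * alpha * x + INR n)
    + 2 * mu * x / INR n * (e_mu mu (- (INR n * x)) / e_mu mu (INR n * x)).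
Proof.
  intros Ha Hmu Hn Hx.
  assert (HN : 0 < INR n) by (apply lt_0_INR; lia).
  assert (He : 0 < e_mu mu (INR n * x)) by (apply e_mu_pos; nra).
  pose proof (exp_pos (alpha * x ^ 2)).
  pose proof (is_series_T_term_quadratic alpha mu n x (fun t => t - x) (- x) 1 0
    Ha Hmu Hx ltac:(intros; cbv beta; ring)) as S1.
  pose proof (is_series_T_term_quadratic alpha mu n x (fun t => (t - x) ^ 2) (x ^ 2) (- 2 * x) 1
    Ha Hmu Hx ltac:(intros; cbv beta; ring)) as S2.
  unfold T_op. rewrite (is_series_unique _ _ S1), (is_series_unique _ _ S2).
  repeat split; [eexists; exact S1 | field; lra | eexists; exact S2 | field; lra].
Qed.
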